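(* Let $(M,\ast)$ be a $\Gamma$-hypersemigroup, and define a fuzzy $\Gamma$-hyperoperation on $M$ by $a\circ\gamma\circ b=\chi_{a\ast\gamma\ast b}$ for $a,b\in M$, $\gamma\in\Gamma$. Then $(M,\circ)$ is a fuzzy $\Gamma$-hypersemigroup.
   Context: $M,\Gamma$ are nonempty sets. A $\Gamma$-hypersemigroup is a set $M$ together with, for each $\gamma\in\Gamma$, a map $(x,y)\mapsto x\ast\gamma\ast y\subseteq M$, extended to subsets by unions, satisfying $(x\ast\alpha\ast y)\ast\beta\ast z=x\ast\alpha\ast(y\ast\beta\ast z)$ for all $x,y,z\in M$, $\alpha,\beta\in\Gamma$. $\chi_A$ is the characteristic function of $A\subseteq M$. A fuzzy subset of $M$ is a map $M\to[0,1]$; a fuzzy $\Gamma$-hyperoperation assigns to each $(a,\gamma,b)$ a fuzzy subset $a\circ\gamma\circ b$. For $a\in M$ and fuzzy $\mu$: $(a\circ\gamma\circ\mu)(r)=\bigvee_{t\in M}((a\circ\gamma\circ t)(r)\wedge\mu(t))$ if $\mu\ne0$, else $0$; $(\mu\circ\gamma\circ a)(r)=\bigvee_{t\in M}(\mu(t)\wedge(t\circ\gamma\circ a)(r))$ if $\mu\ne0$, else $0$. $(M,\circ)$ is a fuzzy $\Gamma$-hypersemigroup if $(a\circ\alpha\circ b)\circ\beta\circ c=a\circ\alpha\circ(b\circ\beta\circ c)$ for all $a,b,c\in M$, $\alpha,\beta\in\Gamma$. *)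

From HB Require Import structures.
From mathcomp Require Import all_boot all_order all_algebra.
From mathcomp Require Import all_classical all_reals.
From mathcomp Require Import numfun.
Set Implicit Arguments. Unset Strict Implicit. Unset Printing Implicit Defensive.
Import Order.TTheory GRing.Theory Num.Theory.
Local Open Scope classical_set_scope.
Local Open Scope ring_scope.

(* Gamma-hyperoperation: (x, gamma, y) |-> x * gamma * y, a subset of M. *)
Definition ghop (M G : Type) := M -> G -> M -> set M.

Definition ghop_setl (M G : Type) (op : ghop M G) (A : set M) (g : G) (z : M)
  : set M := \bigcup_(u in A) op u g z.
Definition ghop_setr (M G : Type) (op : ghop M G) (x : M) (g : G) (B : set M)
  : set M := \bigcup_(v in B) op x g v.

Definition is_gamma_hypersemigroup (M G : Type) (op : ghop M G) : Prop :=
  forall (x y z : M) (a b : G),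
    ghop_setl op (op x a y) b z = ghop_setr op x a (op y b z).

Definition is_fuzzy (R : realType) (M : Type) (mu : M -> R) : Prop :=
  forall x, 0 <= mu x <= 1.

Definition fghop (R : realType) (M G : Type) := M -> G -> M -> (M -> R).

Definition is_fuzzy_ghop (R : realType) (M G : Type) (fo : fghop R M G) : Prop :=
  forall a g b, is_fuzzy (fo a g b).

Definition fuzzy_compr (R : realType) (M G : Type) (fo : fghop R M G)
  (a : M) (g : G) (mu : M -> R) : M -> R :=
  fun r => if `[< mu = (fun _ => 0) >] then 0
           else sup [set Num.min (fo a g t r) (mu t) | t in [set: M]].

Definition fuzzy_compl (R : realType) (M G : Type) (fo : fghop R M G)
  (mu : M -> R) (g : G) (a : M) : M -> R :=
  fun r => if `[< mu = (fun _ => 0) >] then 0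
           else sup [set Num.min (mu t) (fo t g a r) | t in [set: M]].

Definition is_fuzzy_gamma_hypersemigroup (R : realType) (M G : Type)
  (fo : fghop R M G) : Prop :=
  is_fuzzy_ghop fo /\
  forall (a b c : M) (al be : G),
    fuzzy_compl fo (fo a al b) be c = fuzzy_compr fo a al (fo b be c).

Definition chi_fghop (R : realType) (M G : Type) (op : ghop M G) : fghop R M G :=
  fun a g b => \1_(op a g b).

From mathcomp Require Import all_boot all_order all_algebra.
From mathcomp Require Import all_classical all_reals.
From mathcomp Require Import numfun.
Import Order.TTheory GRing.Theory Num.Theory.
Local Open Scope classical_set_scope.
Local Open Scope ring_scope.

(* For characteristic functions the sup-min composition is computed pointwise:
   min (chi_A t) (chi_(F t) r) is 1 exactly when t is a witness of
   r \in \bigcup_(t in A) F t, so the sup is the characteristic function of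
   that union.  Hence the fuzzy products (chi_(a*al*b)) o be o c and
   a o al o (chi_(b*be*c)) are the characteristic functions of
   (a*al*b)*be*c and a*al*(b*be*c), which coincide by associativity of the
   Gamma-hyperoperation. *)

Lemma sup_max (R : realType) (E : set R) (x : R) :
  E x -> ubound E x -> sup E = x.
Proof.
move=> Ex ubx; apply/le_anti; rewrite ge_sup //=; last by exists x.
by apply: ub_le_sup => //; exists x.
Qed.

Section Indicator.
Variable R : realType.

Lemma indic_ge0 (T : Type) (A : set T) (x : T) : 0 <= \1_A x :> R.
Proof. by rewrite indicE; case: (x \in A). Qed.

Lemma indic_le1 (T : Type) (A : set T) (x : T) : \1_A x <= 1 :> R.
Proof. by rewrite indicE; case: (x \in A). Qed.

Lemma indic_fuzzy (T : Type) (A : set T) : is_fuzzy (\1_A : T -> R).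
Proof. by move=> x; rewrite indic_ge0 indic_le1. Qed.

Lemma indic_eq_cst0 (T : Type) (A : set T) : (\1_A : T -> R) = (fun=> 0) -> A = set0.
Proof.
move=> A0; apply/seteqP; split=> // t At.
by have := congr1 (fun f => f t) A0; rewrite /= indicE mem_set // => /eqP; rewrite oner_eq0.
Qed.

Lemma sup_min_indic (T U : Type) (A : set T) (F : T -> set U) (r : U) :
  inhabited T ->
  sup [set Num.min (\1_A t) (\1_(F t) r) | t in [set: T]]
  = \1_(\bigcup_(t in A) F t) r :> R.
Proof.
case=> t0; set S := [set _ | t in _]; set V := \bigcup_(t in A) F t.
have ubS : ubound S (\1_V r).
  move=> _ [t _ <-]; case: (pselect (V r)) => [Vr|nVr].
    by rewrite [leRHS]indicE mem_set // ge_min indic_le1.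
  rewrite [leRHS]indicE memNset // ge_min; case: (pselect (A t)) => At.
    by rewrite orbC [\1_(F t) r]indicE memNset ?lexx // => Ftr; apply: nVr; exists t.
  by rewrite [\1_A t]indicE memNset ?lexx.
apply: sup_max => //; case: (pselect (V r)) => [[t At Ftr]|nVr].
  by exists t => //; rewrite !indicE !mem_set // ?minxx //; exists t.
have V0 : \1_V r = 0 :> R by rewrite indicE memNset.
exists t0 => //; rewrite V0; apply/le_anti/andP; split; last by rewrite le_min !indic_ge0.
by rewrite -V0; apply: ubS; exists t0.
Qed.

End Indicator.

Section CharacteristicProducts.
Variables (R : realType) (M G : Type) (op : ghop M G).
Hypothesis hM : inhabited M.

Lemma fuzzy_compl_chi (A : set M) (g : G) (c : M) :
  fuzzy_compl (chi_fghop R op) \1_A g c = \1_(ghop_setl op A g c).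
Proof.
apply/funext=> r; rewrite /fuzzy_compl; case: asboolP => [/indic_eq_cst0 A0|_].
  by rewrite /ghop_setl A0 bigcup_set0 indic0.
exact: sup_min_indic.
Qed.

Lemma fuzzy_compr_chi (a : M) (g : G) (B : set M) :
  fuzzy_compr (chi_fghop R op) a g \1_B = \1_(ghop_setr op a g B).
Proof.
apply/funext=> r; rewrite /fuzzy_compr; case: asboolP => [/indic_eq_cst0 B0|_].
  by rewrite /ghop_setr B0 bigcup_set0 indic0.
under eq_imagel do rewrite minC.
exact: sup_min_indic.
Qed.

End CharacteristicProducts.

Theorem theorem4p18 (R : realType) (M G : Type)
  (hM : inhabited M) (hG : inhabited G) (op : ghop M G) :
  is_gamma_hypersemigroup op ->
  is_fuzzy_gamma_hypersemigroup (chi_fghop R op).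
Proof.
move=> assoc; split; first by move=> a g b; exact: indic_fuzzy.
move=> a b c al be.
by rewrite /chi_fghop fuzzy_compl_chi // fuzzy_compr_chi // assoc.
Qed.
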